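(* Fix a notion of independence for which $N.X$ is defined for all random variables $X$ and all integers $N\ge 0$ (as in the context). Suppose $\{K_n\}_{n\ge1}$ is a family of generalized cumulants for this notion of independence, i.e. it satisfies (K1'), (K2) and (K3). Then for every $X$ and every $n\ge1$, $M_n(N.X)$ (as a function of $N\in\{0,1,2,\dots\}$) is given by a polynomial in $N$, and $K_n(X)$ equals the coefficient of $N$ in this polynomial. In particular, if $\{K_n\}$ and $\{K_n'\}$ are two families satisfying (K1'), (K2), (K3), then $K_n(X)=K_n'(X)$ for all $n$ and all $X$.
   Context: An algebraic probability space is a pair $(\mathcal{A},\varphi)$ with $\mathcal{A}$ a unital $*$-algebra over $\mathbb{C}$ and $\varphi$ a state ($\varphi$ linear, $\varphi(a^*a)\ge0$, $\varphi(1)=1$). For $X\in\mathcal{A}$ write $M_n(X)=\varphi(X^n)$. Fix a notion of independence of random variables (for example commutative, free, Boolean, or monotone independence, the latter with respect to the order of the variables). For an integer $N\ge1$, $N.X$ denotes $X^{(1)}+\cdots+X^{(N)}$, where $X^{(1)},\dots,X^{(N)}$ are independent (in the fixed sense, and in this order) random variables in some algebraic probability space, each identically distributed to $X$ in the sense of moments ($M_n(X^{(i)})=M_n(X)$ for all $n$); it is assumed that the moments of $N.X$ depend only on the moments of $X$. By convention $M_n(0.X)=\delta_{n0}$ and $K_n(0.X):=\delta_{n0}$. A family $\{K_n\}_{n\ge1}$ assigns to each random variable $X$ (in any algebraic probability space) numbers $K_n(X)$ depending only on the moments of $X$, and satisfies: (K1') $K_n(N.X)=N\,K_n(X)$ for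 all $n\ge1$ and all integers $N\ge 0$; (K2) $K_n(\lambda X)=\lambda^nK_n(X)$ for all $\lambda>0$ and $n\ge1$; (K3) for each $n$ there is a polynomial $Q_n$ in $n-1$ variables, independent of $X$, with $M_n(X)=K_n(X)+Q_n(K_1(X),\dots,K_{n-1}(X))$ for all $X$. *)

From HB Require Import structures.
From mathcomp Require Import all_boot all_order all_algebra.
Set Implicit Arguments. Unset Strict Implicit. Unset Printing Implicit Defensive.
Import Order.TTheory GRing.Theory Num.Theory.
Local Open Scope ring_scope.

(* A polynomial with coefficients in C in finitely many variables, given as a
   finite list of monomials (coefficient, exponent list); the exponent of
   variable i is the i-th entry of the list (0 if absent). *)
Definition mpoly (C : Type) := seq (C * seq nat).

Definition mpoly_eval (C : numClosedFieldType) (k : nat) (p : mpoly C)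
    (x : 'I_k -> C) : C :=
  \sum_(m <- p) m.1 * \prod_(i < k) x i ^+ nth 0%N m.2 i.

(* Abstract setting of the paper: random variables of type RV (in any
   algebraic probability spaces), their moments M X n = phi(X^n),
   scaling  scale l X = l X, and the operation  dot N X = N.X  coming from the
   fixed notion of independence. *)
Definition independence_setting (C : numClosedFieldType) (RV : Type)
    (M : RV -> nat -> C) (scale : C -> RV -> RV) (dot : nat -> RV -> RV) : Prop :=
  [/\
      (forall X, M X 0%N = 1),
      (forall (l : C) X n, 0 < l -> M (scale l X) n = l ^+ n * M X n),
      (forall X n, M (dot 0%N X) n = (n == 0%N)%:R),
      (* 1.X = X^{(1)} is identically distributed to X *)
      (forall X n, M (dot 1%N X) n = M X n) &
      (forall X Y, (forall n, M X n = M Y n) ->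
         forall N n, M (dot N X) n = M (dot N Y) n)].

Definition gen_cumulants (C : numClosedFieldType) (RV : Type)
    (M : RV -> nat -> C) (scale : C -> RV -> RV) (dot : nat -> RV -> RV)
    (K : nat -> RV -> C) : Prop :=
  [/\
      (forall X Y, (forall n, M X n = M Y n) -> forall n, (1 <= n)%N ->
         K n X = K n Y),
      (* (K1') *)
      (forall n N X, (1 <= n)%N -> K n (dot N X) = N%:R * K n X),
      (* (K2) *)
      (forall (l : C) n X, 0 < l -> (1 <= n)%N -> K n (scale l X) = l ^+ n * K n X) &
      (* (K3) *)
      (exists Q : nat -> mpoly C, forall n X, (1 <= n)%N ->
         M X n = K n X + mpoly_eval (Q n) (fun i : 'I_n.-1 => K i.+1 X))].

From HB Require Import structures.
From mathcomp Require Import all_boot all_order all_algebra.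
Import Order.TTheory GRing.Theory Num.Theory.
Set Implicit Arguments. Unset Strict Implicit.
Local Open Scope ring_scope.

(* Fix X and n = k+1, write x_i = K_{i+1}(X) and let q = Q_n.  By (K1')
   and (K3), M_n(N.X) = N K_n(X) + q(N x_1, ..., N x_k); sorting the
   monomials of q by their degree d(m) (total exponent) turns the last term
   into a polynomial in N, so M_n(N.X) is a polynomial P(N) whose coefficient
   of N is K_n(X) plus the sum of the coefficients of the monomials of degree
   one.  Replacing X by l.X (l a positive integer) and using (K2) shows that
   q(l N x_1, ..., l^k N x_k) = l^n q(N x_1, ..., N x_k).  Comparing the
   coefficients of N, then the coefficients of l^n, shows that the monomials
   of degree one contribute 0: such a monomial has weight w(m) = sum of
   (i+1) e_i at most k < n.  Hence K_n(X) = P'(0), and since P is determined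
   by its values at the integers, any two cumulant families coincide. *)

Lemma poly_eq_on_pos_nat (C : numClosedFieldType) (p q : {poly C}) :
  (forall j : nat, p.[j.+1%:R] = q.[j.+1%:R]) -> p = q.
Proof.
move=> pq; apply/eqP; rewrite -subr_eq0; apply/eqP.
apply: (@roots_geq_poly_eq0 _ _ [seq j.+1%:R | j <- iota 0 (size (p - q))]).
- by apply/allP => _ /mapP [j _ ->]; rewrite /root hornerD hornerN pq subrr.
- by rewrite map_inj_uniq ?iota_uniq // => a b /eqP; rewrite eqr_nat => /eqP [].
- by rewrite size_map size_iota.
Qed.

Lemma eq_mpoly_eval (C : numClosedFieldType) (k : nat) (p : mpoly C)
    (x y : 'I_k -> C) :
  (forall i, x i = y i) -> mpoly_eval p x = mpoly_eval p y.
Proof.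
move=> xy; apply: eq_bigr => m _; congr (_ * _).
by apply: eq_bigr => i _; rewrite xy.
Qed.

Section WeightedEvaluation.

Variables (C : numClosedFieldType) (k : nat).
Implicit Types (p : mpoly C) (x : 'I_k -> C) (m : C * seq nat).

Definition mono_deg m : nat := (\sum_(i < k) nth 0%N m.2 i)%N.
Definition mono_wt m : nat := (\sum_(i < k) i.+1 * nth 0%N m.2 i)%N.
Definition mono_val x m : C := m.1 * \prod_(i < k) x i ^+ nth 0%N m.2 i.

(* Each of the k variables has weight at most k. *)
Lemma mono_wt_le m : (mono_wt m <= k * mono_deg m)%N.
Proof.
rewrite /mono_wt /mono_deg big_distrr /=; apply: leq_sum => i _.
by rewrite leq_mul // ltn_ord.
Qed.

(* p(l x_1, l^2 x_2, ..., l^k x_k) at the rescaled point (t x_i), viewed as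
   a polynomial in t: monomials are grouped by degree. *)
Definition scaled_poly x (l : C) p : {poly C} :=
  \sum_(m <- p) (mono_val x m * l ^+ mono_wt m) *: 'X^(mono_deg m).

Lemma horner_scaled_poly x l p t :
  (scaled_poly x l p).[t] = mpoly_eval p (fun i => l ^+ i.+1 * (t * x i)).
Proof.
rewrite /scaled_poly horner_sum; apply: eq_bigr => m _.
rewrite hornerZ hornerXn /mono_val /mono_wt /mono_deg.
rewrite -!prodrXr -!mulrA; congr (_ * _); rewrite -!big_split /=.
by apply: eq_bigr => i _; rewrite !exprMn exprM mulrCA [t ^+ _ * _]mulrC.
Qed.

Lemma coef1_scaled_poly x l p :
  (scaled_poly x l p)`_1 =
  \sum_(m <- p | mono_deg m == 1%N) mono_val x m * l ^+ mono_wt m.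
Proof. by rewrite coef_sumMXn. Qed.

Lemma scaled_poly_coef1_eq0 x p :
  (forall l N : nat, (scaled_poly x l.+1%:R p).[N%:R] =
                     l.+1%:R ^+ k.+1 * (scaled_poly x 1 p).[N%:R]) ->
  (scaled_poly x 1 p)`_1 = 0.
Proof.
move=> homog; set c := (scaled_poly x 1 p)`_1.
(* Comparing coefficients of N: the degree-one part is homogeneous in l. *)
have coef1_homog (l : nat) :
    (scaled_poly x l.+1%:R p)`_1 = l.+1%:R ^+ k.+1 * c.
  have -> : scaled_poly x l.+1%:R p = l.+1%:R ^+ k.+1 *: scaled_poly x 1 p.
    by apply: poly_eq_on_pos_nat => j; rewrite hornerZ homog.
  by rewrite coefZ.
(* Viewed as a polynomial in l, that degree-one part equals c l^(k+1); but
   its monomials have weight at most k, so c = 0. *)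
pose W := \sum_(m <- p | mono_deg m == 1%N) mono_val x m *: 'X^(mono_wt m).
have W_eq : W = c *: 'X^(k.+1).
  apply: poly_eq_on_pos_nat => l.
  rewrite hornerZ hornerXn mulrC -coef1_homog coef1_scaled_poly horner_sum.
  by apply: eq_bigr => m _; rewrite hornerZ hornerXn.
have := congr1 (fun q : {poly C} => q`_k.+1) W_eq.
rewrite coefZ coefXn eqxx mulr1 coef_sumMXn big1 // => m /andP [/eqP deg1].
have wt_lt : (mono_wt m < k.+1)%N by have := mono_wt_le m; rewrite deg1 muln1.
by rewrite ltn_eqF.
Qed.

End WeightedEvaluation.

Section CumulantsAreLinearCoefficients.

Variables (C : numClosedFieldType) (RV : Type) (M : RV -> nat -> C).
Variables (scale : C -> RV -> RV) (dot : nat -> RV -> RV).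
Variables (K : nat -> RV -> C) (Q : nat -> mpoly C).

Hypothesis M_scale : forall (l : C) X n, 0 < l -> M (scale l X) n = l ^+ n * M X n.
Hypothesis K_dot : forall n N X, (1 <= n)%N -> K n (dot N X) = N%:R * K n X.
Hypothesis K_scale :
  forall (l : C) n X, 0 < l -> (1 <= n)%N -> K n (scale l X) = l ^+ n * K n X.
Hypothesis M_K_Q : forall n X, (1 <= n)%N ->
  M X n = K n X + mpoly_eval (Q n) (fun i : 'I_n.-1 => K i.+1 X).

Variables (X : RV) (k : nat).

Let x : 'I_k -> C := fun i => K i.+1 X.

Lemma Q_part_scale_dot (l : C) N : 0 < l ->
  mpoly_eval (Q k.+1) (fun i : 'I_k => K i.+1 (scale l (dot N X))) =
  (scaled_poly x l (Q k.+1)).[N%:R].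
Proof.
by move=> l_gt0; rewrite horner_scaled_poly; apply: eq_mpoly_eval => i;
  rewrite K_scale // K_dot.
Qed.

Lemma moment_dot N :
  M (dot N X) k.+1 = N%:R * K k.+1 X + (scaled_poly x 1 (Q k.+1)).[N%:R].
Proof.
rewrite M_K_Q // K_dot // horner_scaled_poly; congr (_ + _).
by apply: eq_mpoly_eval => i; rewrite expr1n mul1r K_dot.
Qed.

(* (K2) makes the Q-part homogeneous of weight n = k+1 in l. *)
Lemma Q_part_homogeneous (l : C) N : 0 < l ->
  (scaled_poly x l (Q k.+1)).[N%:R] =
  l ^+ k.+1 * (scaled_poly x 1 (Q k.+1)).[N%:R].
Proof.
move=> l_gt0; have := M_K_Q (scale l (dot N X)) (ltn0Sn k).
rewrite M_scale // moment_dot K_scale // K_dot // Q_part_scale_dot //.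
by rewrite mulrDr => /addrI.
Qed.

Lemma moment_dot_polynomial :
  exists P : {poly C},
    (forall N : nat, M (dot N X) k.+1 = P.[N%:R]) /\ K k.+1 X = P`_1.
Proof.
exists (K k.+1 X *: 'X + scaled_poly x 1 (Q k.+1)); split.
  by move=> N; rewrite moment_dot hornerD hornerZ hornerX mulrC.
rewrite coefD coefZ coefX eqxx mulr1 scaled_poly_coef1_eq0 ?addr0 // => l N.
exact: Q_part_homogeneous.
Qed.

End CumulantsAreLinearCoefficients.

Theorem mainTheorem1 (C : numClosedFieldType) (RV : Type)
    (M : RV -> nat -> C) (scale : C -> RV -> RV) (dot : nat -> RV -> RV)
    (K : nat -> RV -> C) :
  independence_setting M scale dot ->
  gen_cumulants M scale dot K ->
  (forall (X : RV) (n : nat), (1 <= n)%N ->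
     exists P : {poly C},
       (forall N : nat, M (dot N X) n = P.[N%:R]) /\ K n X = P`_1)
  /\
  (forall K' : nat -> RV -> C, gen_cumulants M scale dot K' ->
     forall (n : nat) (X : RV), (1 <= n)%N -> K n X = K' n X).
Proof.
case=> _ M_scale _ _ _.
have linear_coef K' : gen_cumulants M scale dot K' ->
    forall X n, (1 <= n)%N -> exists P : {poly C},
      (forall N : nat, M (dot N X) n = P.[N%:R]) /\ K' n X = P`_1.
  case=> _ K_dot K_scale [Q M_K_Q] X [|k] // _.
  exact: (moment_dot_polynomial M_scale K_dot K_scale M_K_Q).
move=> cumK; split; first exact: linear_coef.
move=> K' cumK' n X n_gt0.
have [P [MP ->]] := linear_coef K cumK X n n_gt0.
have [P' [MP' ->]] := linear_coef K' cumK' X n n_gt0.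
suff -> : P = P' by [].
by apply: poly_eq_on_pos_nat => j; rewrite -MP -MP'.
Qed.
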